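(* For each $c<\frac14$ there is $\lambda_0$ such that for all $\lambda>\lambda_0$ and all even rectangles $\Lambda$, $$Z^{\mathrm{per}}_{\Lambda,\lambda}\ge e^{c\lambda^{-1/2}\mathrm{Area}(\Lambda)}.$$
   Context: Tiles: $T_{(x,y)}=[x-1,x+1]\times[y-1,y+1]$; $\Omega=\{\sigma\in\{0,1\}^{\mathbb{Z}^2}: \sigma(u)=\sigma(v)=1,u\ne v\Rightarrow\mathrm{int}(T_u)\cap\mathrm{int}(T_v)=\emptyset\}$. A rectangle $[x,x+K]\times[y,y+L]$ (integers, $K,L\ge1$) is even if $x,y,K,L$ are even; $\mathrm{Area}=KL$. Faces: unit squares with integer corners; vacant if in no tile. $w_{\Lambda,\lambda}(\sigma)=\lambda^{-\frac14\#\{\text{vacant faces}\subset\Lambda\}}$; $\Omega^{\mathrm{per}}_\Lambda$ = configurations periodic under $(\mathrm{Width}\Lambda,0),(0,\mathrm{Height}\Lambda)$; $Z^{\mathrm{per}}_{\Lambda,\lambda}=\sum_{\sigma\in\Omega^{\mathrm{per}}_\Lambda}w_{\Lambda,\lambda}(\sigma)$. *)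

From HB Require Import structures.
From mathcomp Require Import all_boot all_order all_algebra.
From mathcomp Require Import all_classical all_reals all_analysis.
Set Implicit Arguments. Unset Strict Implicit. Unset Printing Implicit Defensive.
Import Order.TTheory GRing.Theory Num.Theory.
Local Open Scope ring_scope.

Definition config := int * int -> bool.

(* Tile T_u = [u1-1,u1+1] x [u2-1,u2+1].  For integer centres u, v the open
   squares int(T_u), int(T_v) intersect iff |u1-v1| < 2 and |u2-v2| < 2. *)
Definition tiles_overlap (u v : int * int) : bool :=
  (`|u.1 - v.1| < 2) && (`|u.2 - v.2| < 2).

Definition admissible (s : config) : Prop :=
  forall u v : int * int, s u -> s v -> u <> v -> ~~ tiles_overlap u v.

(* The face (unit square) [a,a+1] x [b,b+1] is contained in T_u iff
   u1 - 1 <= a <= u1 and u2 - 1 <= b <= u2. *)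
Definition face_in_tile (f u : int * int) : bool :=
  [&& u.1 - 1 <= f.1, f.1 <= u.1, u.2 - 1 <= f.2 & f.2 <= u.2].

(* A face is vacant if it lies in no tile of sigma; the only candidate
   centres are f + {0,1}^2. *)
Definition vacant (s : config) (f : int * int) : bool :=
  ~~ [exists d : bool * bool,
        let u := (f.1 + (d.1 : nat)%:Z, f.2 + (d.2 : nat)%:Z) in
        s u && face_in_tile f u].

(* Rectangle Lambda = [x, x+K] x [y, y+L]; its faces are [a,a+1]x[b,b+1]
   with x <= a < x+K, y <= b < y+L. *)
Definition n_vacant (x y : int) (K L : nat) (s : config) : nat :=
  #|[set p : 'I_K * 'I_L | vacant s (x + (p.1 : nat)%:Z, y + (p.2 : nat)%:Z)]|.

Definition weight {R : realType} (x y : int) (K L : nat) (lam : R)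
  (s : config) : R :=
  powR lam (- ((n_vacant x y K L s)%:R / 4)).

(* Periodic configurations (periods (K,0),(0,L), K,L >= 1) are in bijection
   with functions on the torus 'I_K x 'I_L (written 'I_K.-1.+1 so that the
   type is inhabited by construction). *)
Definition torus_idx (n : nat) (a : int) : 'I_n.-1.+1 :=
  inord (absz (a %% n%:Z)%Z).

Definition per_ext (K L : nat) (f : {ffun 'I_K.-1.+1 * 'I_L.-1.+1 -> bool})
  : config := fun p => f (torus_idx K p.1, torus_idx L p.2).

Definition periodic (K L : nat) (s : config) : Prop :=
  forall p : int * int,
    s (p.1 + K%:Z, p.2) = s p /\ s (p.1, p.2 + L%:Z) = s p.

Definition Zper {R : realType} (x y : int) (K L : nat) (lam : R) : R :=
  \sum_(f : {ffun 'I_K.-1.+1 * 'I_L.-1.+1 -> bool}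
          | `[< admissible (per_ext f) >])
     weight x y K L lam (per_ext f).

Definition even_int (z : int) : bool := (2 %| z)%Z.

From HB Require Import structures.
From mathcomp Require Import all_boot all_order all_algebra.
From mathcomp Require Import all_classical all_reals all_analysis.
From mathcomp Require Import zify ring lra.
Import Order.TTheory GRing.Theory Num.Theory.
Local Open Scope ring_scope.

(* Lower bound by an explicit family of periodic configurations on the
   2m x 2n torus.  Tiles are centred only on the odd columns (first
   coordinate odd).  Along each such column the tiles are governed by a phase
   sequence p_0, ..., p_(n-1) in {0,1}: a tile sits at height 2k when p_k
   holds, and at 2k+1 when neither p_k nor p_(k+1) holds.  The column is thus
   a chain of tiles at distance 2, shifted by one at every phase change, and
   each phase change leaves exactly one vacant face in each of the two
   adjacent face columns, i.e. costs lambda^(-1/2).  Periodicity forces an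
   even number of phase changes, and summing t^(#changes) over such phase
   sequences gives at least (1 + t)^n with t = lambda^(-1/2).  Hence
   Zper >= (1 + t)^(mn), and 1 + t >= exp(4 c t) as soon as t <= 1 - 4c. *)

Definition tmod (N : nat) (a : int) : nat := absz (a %% N%:Z)%Z.

Lemma tmod_lt N a : (0 < N)%N -> (tmod N a < N)%N.
Proof.
move=> N_gt0; rewrite /tmod.
have N_neq0 : N%:Z != 0 by rewrite eqz_nat -lt0n.
have := modz_ge0 a N_neq0; have := ltz_mod a N_neq0.
by case: (a %% N%:Z)%Z.
Qed.

Lemma tmodDn N a (k : nat) : (0 < N)%N -> tmod N (a + k%:Z) = ((tmod N a + k) %% N)%N.
Proof.
move=> N_gt0; rewrite /tmod -modzDml.
have : (0 <= (a %% N%:Z)%Z) by apply: modz_ge0; rewrite eqz_nat -lt0n.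
by case: (a %% N%:Z)%Z => // r _ /=; rewrite -PoszD modz_nat.
Qed.

Lemma torus_idxE N a : (0 < N)%N -> nat_of_ord (torus_idx N a) = tmod N a.
Proof. by move=> N_gt0; rewrite /torus_idx inordK // prednK // tmod_lt. Qed.

Lemma sum_modn_shift (N r : nat) (h : nat -> nat) :
  (\sum_(b < N) h ((r + b) %% N)%N = \sum_(b < N) h b)%N.
Proof.
case: N h => [|N] h; first by rewrite !big_ord0.
pose s (b : 'I_N.+1) : 'I_N.+1 := Ordinal (ltn_pmod (r + b) (ltn0Sn N)).
have s_inj : injective s.
  move=> b1 b2 /(congr1 val) /= /eqP.
  by rewrite eqn_modDl => /eqP; rewrite !modn_small // => /val_inj.
by rewrite [RHS](reindex_inj s_inj).
Qed.

Lemma sum_ord_double (n : nat) (h : nat -> nat) :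
  (\sum_(j < n.*2) h j = \sum_(k < n) (h k.*2 + h k.*2.+1))%N.
Proof.
elim: n => [|n IH]; first by rewrite !big_ord0.
by rewrite doubleS !big_ord_recr /= IH addnA.
Qed.

Lemma half_doubleS k : (k.*2.+1)./2 = k.
Proof. by rewrite /= uphalf_double. Qed.

Lemma modn_double a n : ((a.*2) %% n.*2 = (a %% n).*2)%N.
Proof. by rewrite -!mul2n muln_modr. Qed.

Section Column.

Variable n : nat.

(* A column is encoded by its initial phase q.1 and the set q.2 of places
   where the phase changes. *)
Definition column_data := (bool * {ffun 'I_n -> bool})%type.

Definition nflips (f : {ffun 'I_n -> bool}) : nat := (\sum_(k < n) f k)%N.

Definition flip_at (f : {ffun 'I_n -> bool}) (k : nat) : bool :=
  if insub k is Some o then f o else false.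

Definition phase (q : column_data) (k : nat) : bool :=
  q.1 (+) odd (\sum_(j < k) flip_at q.2 j)%N.

Definition column (q : column_data) (j : nat) : bool :=
  if odd j then ~~ phase q j./2 && ~~ phase q ((j./2).+1 %% n)
  else phase q j./2.

Lemma flip_atE f (o : 'I_n) : flip_at f o = f o.
Proof. by rewrite /flip_at valK. Qed.

Lemma nflipsE f : nflips f = (\sum_(k < n) flip_at f k)%N.
Proof. by apply: eq_bigr => o _; rewrite flip_atE. Qed.

Lemma column_double q k : column q k.*2 = phase q k.
Proof. by rewrite /column odd_double doubleK. Qed.

Lemma column_doubleS q k :
  column q k.*2.+1 = ~~ phase q k && ~~ phase q (k.+1 %% n).
Proof. by rewrite /column /= odd_double /= uphalf_double. Qed.

(* The cyclic wrap-around at k = n - 1 is where the parity hypothesis enters. *)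
Lemma phase_flip q k : ~~ odd (nflips q.2) -> (k < n)%N ->
  (phase q k != phase q (k.+1 %% n)) = flip_at q.2 k.
Proof.
move=> even_q k_lt; rewrite /phase.
case: (ltngtP k.+1 n) => [lt|gt|E].
- rewrite modn_small // big_ord_recr /= oddD oddb.
  by case: q.1; case: (odd _); case: (flip_at _ _).
- by move: gt k_lt; lia.
- rewrite E modnn big_ord0 /=.
  have S : (\sum_(j < n) flip_at q.2 j = \sum_(j < k.+1) flip_at q.2 j)%N.
    by rewrite -!(big_mkord xpredT (fun j => nat_of_bool (flip_at q.2 j))) E.
  move: even_q; rewrite nflipsE S big_ord_recr /= oddD oddb.
  by case: q.1; case: (odd _); case: (flip_at _ _).
Qed.

Lemma column_sparse q j : (j < n.*2)%N ->
  ~~ (column q j && column q (j.+1 %% n.*2)).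
Proof.
move=> j_lt; have Ej := odd_double_half j; set k := j./2 in Ej *.
case oj: (odd j) Ej => /= Ej.
- have -> : j.+1 = (k.+1).*2 by rewrite -Ej doubleS.
  rewrite modn_double column_double /column oj -/k.
  by case: (phase _ _); case: (phase _ _).
- have j1_lt : (j.+1 < n.*2)%N.
    by move: j_lt; rewrite -Ej -!muln2; lia.
  rewrite (modn_small j1_lt) -Ej ?add0n column_double column_doubleS.
  by case: (phase _ _).
Qed.

Lemma column_gaps q : ~~ odd (nflips q.2) ->
  (\sum_(j < n.*2) (~~ column q j && ~~ column q (j.+1 %% n.*2)))%N = nflips q.2.
Proof.
move=> even_q; rewrite nflipsE (sum_ord_double n (fun j =>
  nat_of_bool (~~ column q j && ~~ column q (j.+1 %% n.*2)))).
apply: eq_bigr => k _.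
have k_lt := ltn_ord k.
have k1_lt : (k.*2.+1 < n.*2)%N by move: k_lt; rewrite -!muln2; lia.
rewrite (modn_small k1_lt) -doubleS modn_double column_double column_doubleS.
rewrite -(phase_flip q k even_q k_lt) column_double.
by case: (phase q k); case: (phase _ _).
Qed.

Hypothesis n_gt0 : (0 < n)%N.

Lemma phase_inj (q1 q2 : column_data) :
  ~~ odd (nflips q1.2) -> ~~ odd (nflips q2.2) ->
  (forall k, (k < n)%N -> phase q1 k = phase q2 k) -> q1 = q2.
Proof.
move=> even1 even2 same_phase.
have E1 : q1.1 = q2.1.
  by have := same_phase 0%N n_gt0; rewrite /phase !big_ord0 /= !addbF.
have E2 : q1.2 = q2.2.
  apply/ffunP => k; rewrite -!flip_atE.
  rewrite -(phase_flip q1 k even1 (ltn_ord k)) -(phase_flip q2 k even2 (ltn_ord k)).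
  by rewrite (same_phase k (ltn_ord k)) (same_phase _ (ltn_pmod _ n_gt0)).
by case: q1 q2 E1 E2 {even1 even2 same_phase} => [a1 f1] [a2 f2] /= -> ->.
Qed.

End Column.

Arguments nflips {n} f.
Arguments phase {n} q k.
Arguments column {n} q j.

Lemma sum_expr_nflips (R : comPzRingType) n (x : R) :
  \sum_(f : {ffun 'I_n -> bool}) x ^+ nflips f = (1 + x) ^+ n.
Proof.
rewrite -[n in RHS]card_ord -prodr_const.
have -> : \prod_(i in 'I_n) (1 + x) = \prod_(i < n) \sum_(b : bool) x ^+ b.
  by apply: eq_bigr => i _; rewrite big_bool /= addrC.
by rewrite bigA_distr_bigA /=; apply: eq_bigr => f _; rewrite prodrXr.
Qed.

Lemma sum_even_nflips_ge (R : realFieldType) n (t : R) : 0 <= t <= 1 ->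
  (1 + t) ^+ n <= \sum_(q : column_data n | ~~ odd (nflips q.2)) t ^+ nflips q.2.
Proof.
move=> /andP [t_ge0 t_le1].
pose E := \sum_(f : {ffun 'I_n -> bool} | ~~ odd (nflips f)) t ^+ nflips f.
have -> : \sum_(q : column_data n | ~~ odd (nflips q.2)) t ^+ nflips q.2 = 2 * E.
  rewrite -(pair_big xpredT (fun f : {ffun 'I_n -> bool} => ~~ odd (nflips f))
             (fun (b : bool) f => t ^+ nflips f)) /=.
  by rewrite big_bool /= mulr2n mulrDl !mul1r.
(* the odd terms cancel in (1 + t)^n + (1 - t)^n *)
have <- : (1 + t) ^+ n + (1 - t) ^+ n = 2 * E.
  rewrite /E -!sum_expr_nflips -big_split /= [in RHS]big_mkcond mulr_sumr.
  apply: eq_bigr => f _; rewrite exprNn -signr_odd.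
  by case: (odd _) => /=; rewrite ?expr1 ?expr0 ?mulN1r ?mul1r ?subrr ?mulr0 // mulr2n mulrDl mul1r.
by rewrite lerDl; apply: exprn_ge0; lra.
Qed.

Section Tiling.

Variables m n : nat.
Hypotheses (m_gt0 : (0 < m)%N) (n_gt0 : (0 < n)%N).

Let m2_gt0 : (0 < m.*2)%N. Proof. by rewrite double_gt0. Qed.
Let n2_gt0 : (0 < n.*2)%N. Proof. by rewrite double_gt0. Qed.

Definition column_family := {ffun 'I_m -> column_data n}.

Definition even_family (P : column_family) := forall c, ~~ odd (nflips (P c).2).

Definition even_families : {pred column_family} :=
  ffun_on (fun q : column_data n => ~~ odd (nflips q.2)).

Definition column_of (P : column_family) (c : nat) : column_data n :=
  if insub c is Some o then P o else (false, [ffun=> false]).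

Definition tiling_at (P : column_family) (i j : nat) : bool :=
  odd i && column (column_of P i./2) j.

Definition tiling (P : column_family) :
  {ffun 'I_(m.*2).-1.+1 * 'I_(n.*2).-1.+1 -> bool} :=
  [ffun z : 'I_(m.*2).-1.+1 * 'I_(n.*2).-1.+1 => tiling_at P z.1 z.2].

Lemma column_ofE P (o : 'I_m) : column_of P o = P o.
Proof. by rewrite /column_of valK. Qed.

Lemma column_of_even P : even_family P -> forall c, ~~ odd (nflips (column_of P c).2).
Proof.
move=> even_P c; rewrite /column_of; case: (insub c) => [k|] //=.
by rewrite /nflips big1 // => i _; rewrite ffunE.
Qed.

Lemma per_ext_tiling P u :
  per_ext (tiling P) u = tiling_at P (tmod (m.*2) u.1) (tmod (n.*2) u.2).
Proof. by rewrite /per_ext ffunE /= !torus_idxE. Qed.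

Lemma tiling_admissible P : admissible (per_ext (tiling P)).
Proof.
have adjacent_columns u v : per_ext (tiling P) u -> per_ext (tiling P) v ->
    v.1 = u.1 + 1%:Z -> False.
  rewrite !per_ext_tiling => /andP [odd_u _] /andP [odd_v _] Ev.
  by move: odd_v; rewrite Ev tmodDn // odd_mod ?odd_double // addn1 /= odd_u.
have same_column u v : per_ext (tiling P) u -> per_ext (tiling P) v ->
    v.1 = u.1 -> v.2 = u.2 + 1%:Z -> False.
  rewrite !per_ext_tiling => /andP [_ cu] /andP [_ cv] Ev1 Ev2.
  move: cv; rewrite Ev1 Ev2 tmodDn // addn1 => cv.
  have := @column_sparse n (column_of P (tmod (m.*2) u.1)./2) _ (tmod_lt _ u.2 n2_gt0).
  by rewrite cu cv.
move=> [u1 u2] [v1 v2] su sv u_neq_v; apply/negP => /andP [/= h1 h2].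
have [E|[E|E]] : u1 = v1 \/ v1 = u1 + 1%:Z \/ u1 = v1 + 1%:Z by lia.
- have [F|[F|F]] : u2 = v2 \/ v2 = u2 + 1%:Z \/ u2 = v2 + 1%:Z by lia.
  + by apply: u_neq_v; rewrite E F.
  + exact: (same_column _ _ su sv).
  + exact: (same_column _ _ sv su).
- exact: (adjacent_columns _ _ su sv).
- exact: (adjacent_columns _ _ sv su).
Qed.

Lemma face_in_tile_corner (p1 p2 : int) (d1 d2 : bool) :
  face_in_tile (p1, p2) (p1 + (d1 : nat)%:Z, p2 + (d2 : nat)%:Z).
Proof. by case: d1; case: d2; rewrite /face_in_tile /=; apply/and4P; split; lia. Qed.

(* A face is covered as soon as one of its four corners carries a tile; the
   corner is chosen on the odd row, and then on the occupied column site. *)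
Lemma vacant_tiling P (a b : nat) x y :
  let i := tmod (m.*2) (x + a%:Z) in let j := tmod (n.*2) (y + b%:Z) in
  vacant (per_ext (tiling P)) (x + a%:Z, y + b%:Z) ->
  ~~ column (column_of P i./2) j && ~~ column (column_of P i./2) (j.+1 %% n.*2).
Proof.
move=> i j; set q := column_of P i./2.
apply: contraLR => covered; rewrite negbK.
apply/existsP; exists (~~ odd i, ~~ column q j).
rewrite /= face_in_tile_corner andbT per_ext_tiling /=.
rewrite (tmodDn _ (x + a%:Z)) // (tmodDn _ (y + b%:Z)) // -/i -/j /tiling_at.
have /andP [-> /eqP ->] :
    odd ((i + ~~ odd i) %% m.*2) && (((i + ~~ odd i) %% m.*2)./2 == i./2).
  have i_lt : (i < m.*2)%N by apply: tmod_lt.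
  case odd_i: (odd i) => /=; first by rewrite addn0 modn_small // odd_i eqxx.
  have Ei := odd_double_half i; rewrite odd_i add0n in Ei.
  have i1_lt : (i.+1 < m.*2)%N.
    by move: i_lt; rewrite -Ei -!muln2; lia.
  by rewrite addn1 modn_small // -Ei half_doubleS doubleK /= odd_double eqxx.
rewrite /= -/q; case cj: (column q j) => /=.
  by rewrite addn0 modn_small // tmod_lt.
by move: covered; rewrite cj /= addn1 negbK.
Qed.

Lemma n_vacant_tiling P x y : even_family P ->
  (n_vacant x y (m.*2) (n.*2) (per_ext (tiling P)) <=
   2 * \sum_(c < m) nflips (P c).2)%N.
Proof.
move=> even_P.
pose gap (i j : nat) : nat :=
  ~~ column (column_of P i./2) j && ~~ column (column_of P i./2) (j.+1 %% n.*2).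
have -> : n_vacant x y (m.*2) (n.*2) (per_ext (tiling P)) =
    (\sum_(p : 'I_(m.*2) * 'I_(n.*2))
       vacant (per_ext (tiling P)) ((x + (p.1 : nat)%:Z)%R, (y + (p.2 : nat)%:Z)%R))%N.
  rewrite /n_vacant cardsE -sum1_card big_mkcond /=; apply: eq_bigr => p _.
  by rewrite unfold_in /vacant /=; case: [exists _, _].
apply: (@leq_trans (\sum_(p : 'I_(m.*2) * 'I_(n.*2))
    gap (tmod (m.*2) (x + (p.1 : nat)%:Z)) (tmod (n.*2) (y + (p.2 : nat)%:Z)))%N).
  apply: leq_sum => p _; rewrite /gap.
  by case: (vacant _ _) (@vacant_tiling P p.1 p.2 x y) => // ->.
rewrite -(pair_big xpredT xpredT (fun (a : 'I_(m.*2)) (b : 'I_(n.*2)) =>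
  gap (tmod (m.*2) (x + a%:Z)) (tmod (n.*2) (y + b%:Z)))) /=.
under eq_bigr => a _ do rewrite tmodDn //.
under eq_bigr => a _ do under eq_bigr => b _ do rewrite tmodDn //.
rewrite (sum_modn_shift _ _ (fun i => \sum_(b < n.*2)
  gap i ((tmod (n.*2) y + b) %% n.*2)))%N.
under [X in (X <= _)%N]eq_bigr => i _ do rewrite (sum_modn_shift _ _ (gap i)).
rewrite (sum_ord_double m (fun i => \sum_(j < n.*2) gap i j))%N.
apply: eq_leq; rewrite big_distrr /=; apply: eq_bigr => c _.
by rewrite mul2n /gap doubleK half_doubleS column_gaps ?column_of_even // column_ofE addnn.
Qed.

Lemma tiling_inj (P1 P2 : column_family) :
  even_family P1 -> even_family P2 -> tiling P1 = tiling P2 -> P1 = P2.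
Proof.
move=> even1 even2 E; apply/ffunP => c; rewrite -!column_ofE.
apply: phase_inj; rewrite ?column_of_even // => k k_lt.
have c_lt := ltn_ord c.
have := congr1 (fun F : {ffun 'I_(m.*2).-1.+1 * 'I_(n.*2).-1.+1 -> bool} =>
   F (inord (c.*2.+1), inord (k.*2))) E.
have c2_lt : (c.*2.+1 < (m.*2).-1.+1)%N.
  by rewrite prednK //; move: c_lt; rewrite -!muln2; lia.
have k2_lt : (k.*2 < (n.*2).-1.+1)%N.
  by rewrite prednK //; move: k_lt; rewrite -!muln2; lia.
by rewrite !ffunE /tiling_at /= !inordK // half_doubleS /= odd_double /= !column_double.
Qed.

Variables (R : realType) (lam : R) (x y : int).
Hypothesis lam_ge1 : 1 <= lam.

Let t := lam `^ (- (1 / 2)).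

Lemma weight_tiling_ge P : even_family P ->
  \prod_(c < m) t ^+ nflips (P c).2 <= weight x y (m.*2) (n.*2) lam (per_ext (tiling P)).
Proof.
move=> even_P; rewrite prodrXr -powR_mulrn ?powR_ge0 // /t -powRrM /weight.
apply: ler_powR => //.
have := n_vacant_tiling P x y even_P; rewrite -(ler_nat R) natrM.
set v := (n_vacant _ _ _ _ _)%:R; set s := (\sum_(_ < _) _)%:R => v_le; lra.
Qed.

Lemma sum_tilings_le_Zper :
  \sum_(P in even_families) weight x y (m.*2) (n.*2) lam (per_ext (tiling P))
  <= Zper x y (m.*2) (n.*2) lam.
Proof.
set A := even_families.
have even_A P : P \in A -> even_family P by move=> /ffun_onP.
rewrite -(big_imset (fun F => weight x y (m.*2) (n.*2) lam (per_ext F))); last first.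
  by move=> P1 P2 /even_A e1 /even_A e2; apply: tiling_inj.
rewrite /Zper [X in _ <= X](bigID (mem (tiling @: A))) /=.
rewrite [X in _ <= X + _](eq_bigl (fun F => F \in tiling @: A)); last first.
  move=> F; case FA: (F \in tiling @: A); rewrite ?andbF ?andbT //.
  by case/imsetP: FA => P _ ->; apply/asboolP; apply: tiling_admissible.
by rewrite lerDl sumr_ge0 // => F _; apply: powR_ge0.
Qed.

Lemma Zper_ge_pow : (1 + t) ^+ (n * m) <= Zper x y (m.*2) (n.*2) lam.
Proof.
have t_ge0 : 0 <= t by apply: powR_ge0.
have t_le1 : t <= 1.
  by rewrite -[leRHS](powRr0 lam) ler_powR //; lra.
apply: le_trans sum_tilings_le_Zper.
apply: (@le_trans _ _ (\sum_(P in even_families) \prod_(c < m) t ^+ nflips (P c).2));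
  last by apply: ler_sum => P /ffun_onP; apply: weight_tiling_ge.
rewrite -(bigA_distr_big _ (fun (c : 'I_m) q => t ^+ nflips q.2)).
rewrite exprM -[m in X in X <= _]card_ord -prodr_const.
apply: ler_prod => c _; rewrite exprn_ge0 /=; last lra.
by apply: sum_even_nflips_ge; rewrite t_ge0 t_le1.
Qed.

End Tiling.

Lemma expR_le_1D (R : realType) (a t : R) : a < 1 -> 0 <= t -> t <= 1 - a ->
  expR (a * t) <= 1 + t.
Proof.
move=> a_lt1 t_ge0 t_le.
have exp_gt0 := expR_gt0 (a * t).
have inv_bound : expR (a * t) * (1 - a * t) <= 1.
  have := expR_ge1Dx (- (a * t)).
  have := expRD (a * t) (- (a * t)); rewrite subrr expR0 => expN expN_ge.
  have := expR_gt0 (- (a * t)); nra.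
have : 1 <= (1 + t) * (1 - a * t) by nra.
nra.
Qed.

Lemma powR_neg_half_le {R : realType} (s lam : R) : 0 < s -> 1 + s ^- 2 < lam ->
  lam `^ (- (1 / 2)) <= s.
Proof.
move=> s_gt0 lam_gt; have lam_gt0 : 0 < lam by have := exprn_gt0 2 s_gt0; nra.
set t := lam `^ _; have t_ge0 : 0 <= t by apply: powR_ge0.
have t2 : t ^+ 2 = lam^-1.
  rewrite /t -powR_mulrn ?powR_ge0 // -powRrM.
  have -> : - (1 / 2) * 2%:R = (-1 : R) by field.
  by rewrite powR_inv1 // ltW.
rewrite -(ler_pXn2r (n := 2)) ?nnegrE ?(ltW s_gt0) // t2.
rewrite -[leRHS]invrK lef_pV2 ?posrE ?invr_gt0 ?exprn_gt0 //; lra.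
Qed.

Lemma even_double_gt0 K : (0 < K)%N -> ~~ odd K -> exists2 k, K = k.*2 & (0 < k)%N.
Proof.
move=> K_gt0 even_K; have E := odd_double_half K.
rewrite (negbTE even_K) add0n in E.
by exists K./2; rewrite // -double_gt0 E.
Qed.

Theorem corollary4p3 (R : realType) (c : R) :
  c < 1 / 4 ->
  exists lam0 : R, forall lam : R, lam0 < lam ->
  forall (x y : int) (K L : nat),
    (1 <= K)%N -> (1 <= L)%N ->
    even_int x -> even_int y -> ~~ odd K -> ~~ odd L ->
    expR (c * powR lam (- (1 / 2)) * (K * L)%:R) <= Zper x y K L lam.
Proof.
move=> c_lt; pose a := 4 * c.
have a_lt1 : a < 1 by rewrite /a; lra.
have oneBa_gt0 : 0 < 1 - a by rewrite subr_gt0.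
exists (1 + (1 - a) ^- 2) => lam lam_gt x y K L K_ge1 L_ge1 _ _ even_K even_L.
have lam_ge1 : 1 <= lam.
  by have := invr_gt0 ((1 - a) ^+ 2); rewrite exprn_gt0 //; lra.
have t_le := powR_neg_half_le _ _ oneBa_gt0 lam_gt.
have [k -> k_gt0] := even_double_gt0 _ K_ge1 even_K.
have [l -> l_gt0] := even_double_gt0 _ L_ge1 even_L.
apply: le_trans (Zper_ge_pow _ _ k_gt0 l_gt0 _ _ x y lam_ge1).
have -> : c * lam `^ (- (1 / 2)) * (k.*2 * l.*2)%:R =
    (a * lam `^ (- (1 / 2))) * (l * k)%:R.
  by rewrite -!muln2 !natrM /a; ring.
rewrite expRM_natr lerXn2r ?nnegrE ?expR_ge0 ?addr_ge0 ?powR_ge0 //.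
by apply: expR_le_1D; rewrite ?powR_ge0.
Qed.
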